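(* Let $(G,E)$ be a finitely generated and contracting self-similar groupoid action on a finite directed graph $E$, and let $q:E^{-\infty}\to\mathcal{J}_{G,E}$ be the quotient map. Then for $\mu,\nu\in E^{-\infty}$, $q(\mu)$ and $q(\nu)$ lie in the same connected component of $\mathcal{J}_{G,E}$ if and only if $\mu\sim_e\nu$. That is, the connected component space $\mathcal{C}(\mathcal{J}_{G,E})$ equals $E^{-\infty}/\sim_e$.
   Context: Directed graph $E=(E^0,E^1,r,s)$; finite paths $\mu_1\cdots\mu_n$ with $s(\mu_i)=r(\mu_{i+1})$; $E^*$ finite paths, $vE^*$ those with range $v$; $E^{-\infty}$ left-infinite paths $\cdots\mu_{-2}\mu_{-1}$ with product topology. A self-similar groupoid action $(G,E)$: $G$ is a groupoid with unit space $E^0$, domain $d$, codomain $c$, acting faithfully so that each $g$ is a length-preserving bijection $d(g)E^*\to c(g)E^*$ with restrictions $g|_\mu\in G$, $d(g|_\mu)=s(\mu)$, satisfying $g\cdot(\mu\nu)=(g\cdot\mu)(g|_\mu\cdot\nu)$. Finitely generated: $G$ is generated as a groupoid by a finite set. Contracting: there is a finite $F\subseteq G$ such that for every $g$ there is $n$ with $g|_\mu\in F$ for all $\mu\in d(g)E^k$, $k\ge n$. Asymptotic equivalence: $\mu\sim_{ae}\nu$ iff there are a finite $F\subseteq G$ and $(g_n)_{n<0}\subseteq F$ with $d(g_n)=r(\mu_n)$ and $g_n\cdot\mu_n\cdots\mu_{-1}=\nu_n\cdots\nu_{-1}$ for all $n<0$; the limit space is $\mathcal{J}_{G,E}=E^{-\infty}/\sim_{ae}$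 with the quotient topology. The relation $\sim_e$: $\mu\sim_e\nu$ iff there is a sequence $(g_n)_{n<0}\subseteq G$ (not required to lie in a finite set) with $d(g_n)=r(\mu_n)$ and $g_n\cdot\mu_n\cdots\mu_{-1}=\nu_n\cdots\nu_{-1}$ for all $n<0$. The connected component space $\mathcal{C}(X)$ of a space $X$ is its quotient by the relation of lying in the same connected component. *)

From HB Require Import structures.
From mathcomp Require Import all_boot all_order all_algebra.
From mathcomp Require Import all_classical all_reals.
From mathcomp Require Import topology_structure connected product_topology
  function_spaces subtype_topology discrete_topology quotient_topology.

Set Implicit Arguments.
Unset Strict Implicit.
Unset Printing Implicit Defensive.

Local Open Scope classical_set_scope.

Record graph := Graph {
  vert : finType;
  edge : finType;
  rg : edge -> vert;
  sr : edge -> vert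
}.

Definition fpath_ok (E : graph) (p : seq (edge E)) : bool :=
  sorted (fun e f => sr e == rg f) p.

(* p \in vE^* : a finite path with range v; the empty sequence stands
   for the vertex v itself (the path of length 0 at v). *)
Definition vpath (E : graph) (v : vert E) (p : seq (edge E)) : bool :=
  fpath_ok p && (if p is e :: _ then rg e == v else true).

Record ssga (E : graph) := SSGA {
  grp : Type;
  dom : grp -> vert E;
  cod : grp -> vert E;
  gmul : grp -> grp -> grp;
  ginv : grp -> grp;
  gunit : vert E -> grp;
  act : grp -> seq (edge E) -> seq (edge E);
  res : grp -> edge E -> grp;
  gunit_dom : forall v, dom (gunit v) = v;
  gunit_cod : forall v, cod (gunit v) = v;
  gmul_dom : forall g h, dom g = cod h -> dom (gmul g h) = dom h;
  gmul_cod : forall g h, dom g = cod h -> cod (gmul g h) = cod g;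
  gmulA : forall g h k, dom g = cod h -> dom h = cod k ->
    gmul (gmul g h) k = gmul g (gmul h k);
  gmul1g : forall g, gmul (gunit (cod g)) g = g;
  gmulg1 : forall g, gmul g (gunit (dom g)) = g;
  ginv_dom : forall g, dom (ginv g) = cod g;
  ginv_cod : forall g, cod (ginv g) = dom g;
  gmulVg : forall g, gmul (ginv g) g = gunit (dom g);
  gmulgV : forall g, gmul g (ginv g) = gunit (cod g);
  (* action: length preserving maps d(g)E^* -> c(g)E^*, forming a
     groupoid homomorphism (hence bijections) *)
  act_vpath : forall g p, vpath (dom g) p -> vpath (cod g) (act g p);
  act_size : forall g p, vpath (dom g) p -> size (act g p) = size p;
  act_unit : forall v p, vpath v p -> act (gunit v) p = p;
  act_mul : forall g h p, dom g = cod h -> vpath (dom h) p ->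
    act (gmul g h) p = act g (act h p);
  act_faithful : forall g h, dom g = dom h -> cod g = cod h ->
    (forall p, vpath (dom g) p -> act g p = act h p) -> g = h;
  res_dom : forall g e, rg e = dom g -> dom (res g e) = sr e;
  res_cod : forall g e, rg e = dom g ->
    cod (res g e) = sr (head e (act g [:: e]));
  act_cons : forall g e p, rg e = dom g -> vpath (sr e) p ->
    act g (e :: p) = act g [:: e] ++ act (res g e) p
}.


Definition resp (E : graph) (A : ssga E) (g : grp A) (p : seq (edge E)) :
  grp A := foldl (@res _ A) g p.

Inductive generated (E : graph) (A : ssga E) (F : set (grp A)) :
  grp A -> Prop :=
| gen_base g : F g -> generated F g
| gen_unit v : generated F (@gunit _ A v)
| gen_inv g : generated F g -> generated F (@ginv _ A g)
| gen_mul g h : @dom _ A g = @cod _ A h -> generated F g -> generated F h ->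
    generated F (@gmul _ A g h).

Definition finitely_generated (E : graph) (A : ssga E) : Prop :=
  exists F : set (grp A), finite_set F /\ forall g, generated F g.

Definition contracting (E : graph) (A : ssga E) : Prop :=
  exists F : set (grp A), finite_set F /\
    forall g, exists n, forall k, (n <= k)%N ->
      forall p, vpath (@dom _ A g) p -> size p = k -> F (resp g p).

(* Left-infinite paths ... mu_(-2) mu_(-1).  We encode mu by
   x : nat -> E^1 with x k = mu_(-(k+1)); the condition
   s(mu_i) = r(mu_(i+1)) reads s(x (k+1)) = r(x k).                    *)
Definition edge_space (E : graph) : topologicalType :=
  {ptws nat -> discrete_topology (edge E)}.

Definition linf_ok (E : graph) : set (edge_space E) :=
  fun x => forall k, sr (x k.+1) = rg (x k).

Definition linf (E : graph) : topologicalType := set_type (@linf_ok E).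

Definition lval (E : graph) (mu : linf E) : nat -> edge E :=
  set_val (mu : set_type (@linf_ok E)).

(* seg mu n = mu_(-n) ... mu_(-1) (a finite path of length n) *)
Definition seg (E : graph) (mu : linf E) (n : nat) : seq (edge E) :=
  rev (mkseq (lval mu) n).

(* asymptotic equivalence: g_k plays the role of g_(-(k+1)) *)
Definition sim_ae (E : graph) (A : ssga E) (mu nu : linf E) : Prop :=
  exists F : set (grp A), finite_set F /\
  exists gs : nat -> grp A, forall k,
    [/\ F (gs k), @dom _ A (gs k) = rg (lval mu k) &
        @act _ A (gs k) (seg mu k.+1) = seg nu k.+1].

Definition sim_e (E : graph) (A : ssga E) (mu nu : linf E) : Prop :=
  exists gs : nat -> grp A, forall k,
    @dom _ A (gs k) = rg (lval mu k) /\
    @act _ A (gs k) (seg mu k.+1) = seg nu k.+1.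

Definition aeclass (E : graph) (A : ssga E) :=
  {C : set (linf E) | exists x, C = sim_ae A x}.

Definition ae_pi (E : graph) (A : ssga E) (x : linf E) : aeclass A :=
  exist _ (sim_ae A x) (ex_intro _ x erefl).

Definition ae_repr (E : graph) (A : ssga E) (C : aeclass A) : linf E :=
  projT1 (cid (proj2_sig C)).

Lemma ae_reprK (E : graph) (A : ssga E) :
  cancel (@ae_repr E A) (@ae_pi E A).
Proof.
move=> [C HC]; rewrite /ae_pi /ae_repr /=.
case: (cid HC) => x /= Hx; subst C.
by congr exist; exact: Prop_irrelevance.
Qed.

HB.instance Definition _ (E : graph) (A : ssga E) :=
  isQuotient.Build (linf E) (aeclass A) (@ae_reprK E A).

Definition limit_space (E : graph) (A : ssga E) : topologicalType :=
  quotient_topology (aeclass A).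

Definition qmap (E : graph) (A : ssga E) (x : linf E) : limit_space A :=
  (\pi_(aeclass A) x)%qT.

(* (=>) For each n, the points whose length-n segment lies in the G-orbit of
   that of mu form a set that depends only on this segment and is saturated for
   asymptotic equivalence; it therefore descends to a clopen subset of the limit
   space containing q(mu), hence containing its connected component.

   (<=) Let X be the ~e-class of mu; we show that q(X) is connected.  Suppose an
   open O and a closed set agree on q(X); their preimages are saturated and agree
   on X, so by compactness membership of a point of X in the preimage O' of O is
   decided by its segment of some fixed length L.  If a, b are in X with a in O'
   and b not, then for every M the segments of a and b of length M + N0 + 1
   are joined by a chain of moves by generators, and one of these moves changes
   the decision.  By contraction, the restrictions of that generator acting on
   the last M + 1 letters lie in a fixed finite set.  A compactness limit of these
   switching pairs is a pair of asymptotically equivalent points of X, exactly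
   one of which lies in O', contradicting saturation. *)

From HB Require Import structures.
From mathcomp Require Import all_boot all_order all_algebra.
From mathcomp Require Import all_classical all_reals.
From mathcomp Require Import topology_structure connected product_topology
  function_spaces subtype_topology discrete_topology quotient_topology.
From mathcomp Require Import nat_topology compact zify.
From Stdlib Require Import Relation_Operators.

Set Implicit Arguments.
Unset Strict Implicit.
Unset Printing Implicit Defensive.

Local Open Scope classical_set_scope.

Section Lastn.
Variable T : Type.
Implicit Types s : seq T.

Definition lastn n s := drop (size s - n) s.

Lemma lastn_size s : lastn (size s) s = s.
Proof. by rewrite /lastn subnn drop0. Qed.

Lemma lastn_cons n x s : (n <= size s)%N -> lastn n (x :: s) = lastn n s.
Proof. by move=> ns; rewrite /lastn /= subSn. Qed.

Lemma lastn_lastn m n s : (m <= n)%N -> lastn m (lastn n s) = lastn m s.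
Proof. by move=> mn; rewrite /lastn drop_drop size_drop; congr drop; lia. Qed.

Lemma lastn_nth_rev x0 n s :
  (n <= size s)%N -> lastn n s = rev (mkseq (nth x0 (rev s)) n).
Proof.
move=> ns; rewrite /lastn -[drop _ _]revK -take_rev; congr rev.
apply: (@eq_from_nth _ x0); rewrite size_takel ?size_mkseq ?size_rev //.
by move=> i ni; rewrite nth_take // nth_mkseq.
Qed.

End Lastn.

Section PathAction.
Variables (E : graph) (A : ssga E).
Implicit Types (v : vert E) (e : edge E) (p u w : seq (edge E)) (g h s : grp A).

Lemma vpath_cons v e p : vpath v (e :: p) = (rg e == v) && vpath (sr e) p.
Proof.
rewrite /vpath /fpath_ok /=; case: p => [|f p] /=; first by rewrite ?andbT.
by rewrite [sr e == _]eq_sym; case: (rg e == v); case: (rg f == sr e); case: path.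
Qed.

Lemma vpath_catl v u w : vpath v (u ++ w) -> vpath v u.
Proof. by elim: u v => [|e u IH] v //=; rewrite !vpath_cons => /andP[-> /IH]. Qed.

Lemma vpath_head v v' e p : vpath v (e :: p) -> vpath v' (e :: p) -> v = v'.
Proof. by rewrite !vpath_cons => /andP[/eqP <- _] /andP[/eqP <- _]. Qed.

Lemma act_nil g : act g [::] = [::].
Proof. by apply/size0nil; rewrite act_size. Qed.

Lemma act_cat g u w : vpath (dom g) (u ++ w) ->
  act g (u ++ w) = act g u ++ act (resp g u) w /\ vpath (dom (resp g u)) w.
Proof.
elim: u g => [|e u IH] g /=; first by rewrite act_nil.
rewrite vpath_cons => /andP[/eqP ge uw].
have [IHe vw] : act (res g e) (u ++ w) = act (res g e) u ++ act (resp (res g e) u) w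
    /\ vpath (dom (resp (res g e) u)) w by apply: IH; rewrite res_dom.
by rewrite (act_cons ge uw) (act_cons ge (vpath_catl uw)) IHe catA.
Qed.

Lemma act_lastn g n w (h := resp g (take (size w - n) w)) : vpath (dom g) w ->
  vpath (dom h) (lastn n w) /\ act h (lastn n w) = lastn n (act g w).
Proof.
move=> vw; rewrite /h /lastn act_size //; set k := (size w - n)%N.
have vw' : vpath (dom g) (take k w ++ drop k w) by rewrite cat_take_drop.
have [gw vd] := act_cat vw'; split => //.
rewrite -[in RHS](cat_take_drop k w) gw drop_size_cat //.
by rewrite act_size ?size_takel ?leq_subr // (vpath_catl vw').
Qed.

Lemma act_ginvK g p : vpath (dom g) p -> act (ginv g) (act g p) = p.
Proof. by move=> vp; rewrite -act_mul ?ginv_dom // gmulVg act_unit. Qed.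

Lemma act_ginvKV g p : vpath (cod g) p -> act g (act (ginv g) p) = p.
Proof. by move=> vp; rewrite -act_mul ?ginv_cod ?ginv_dom // gmulgV act_unit. Qed.

Definition in_orbit u w := exists2 g : grp A, vpath (dom g) u & act g u = w.

Lemma in_orbit_refl v u : vpath v u -> in_orbit u u.
Proof. by move=> vu; exists (gunit A v); rewrite ?gunit_dom ?act_unit. Qed.

Lemma size_in_orbit u w : in_orbit u w -> size w = size u.
Proof. by move=> [g vu <-]; rewrite act_size. Qed.

Lemma in_orbit_fpath u w : in_orbit u w -> fpath_ok w.
Proof. by move=> [g vu <-]; have /andP[] := act_vpath vu. Qed.

Lemma in_orbit_act u w s : in_orbit u w -> vpath (dom s) w -> in_orbit u (act s w).
Proof.
move=> [g vu gu]; case: w gu => [|e w] gu vs; first by rewrite act_nil -gu; exists g.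
have sg : dom s = cod g by apply: vpath_head vs _; rewrite -gu act_vpath.
by exists (gmul s g); rewrite ?gmul_dom // act_mul // gu.
Qed.

Lemma in_orbit_trans u w w' : in_orbit u w -> in_orbit w w' -> in_orbit u w'.
Proof. by move=> uw [s vs <-]; exact: in_orbit_act. Qed.

Lemma in_orbit_lastn n u w : in_orbit u w -> in_orbit (lastn n u) (lastn n w).
Proof.
move=> [g vu <-]; have [vh gh] := act_lastn n vu.
by exists (resp g (take (size u - n) u)).
Qed.

End PathAction.

Section Segments.
Variable E : graph.
Implicit Types (v : vert E) (z w : linf E).

Lemma lvalP z k : sr (lval z k.+1) = rg (lval z k).
Proof. by have := set_valP z; rewrite /lval set_valE; apply. Qed.

Lemma linf_exists (f : nat -> edge E) : linf_ok f -> exists z : linf E, lval z = f.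
Proof. by move=> ok; exists (exist _ (f : edge_space E) (mem_set ok)). Qed.

Lemma segS z n : seg z n.+1 = lval z n :: seg z n.
Proof. by rewrite /seg mkseqS rev_rcons. Qed.

Lemma size_seg z n : size (seg z n) = n.
Proof. by rewrite /seg size_rev size_mkseq. Qed.

Lemma vpath_seg z n : vpath (rg (lval z n)) (seg z n.+1).
Proof.
elim: n => [|n IH]; first by rewrite segS vpath_cons eqxx.
by rewrite segS vpath_cons eqxx /= lvalP.
Qed.

Lemma vpath_seg_eq v z n : vpath v (seg z n.+1) -> v = rg (lval z n).
Proof. by move: (vpath_seg z n); rewrite segS => /vpath_head /[apply]. Qed.

Lemma seg_lastn z m n : (m <= n)%N -> lastn m (seg z n) = seg z m.
Proof.
elim: n => [|n IH]; first by rewrite leqn0 => /eqP ->.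
rewrite leq_eqVlt => /orP[/eqP ->|mn]; first by rewrite -{1}(size_seg z n.+1) lastn_size.
by rewrite segS lastn_cons ?size_seg // IH.
Qed.

Lemma seg_eqP z w n : seg z n = seg w n <-> forall t, (t < n)%N -> lval z t = lval w t.
Proof.
elim: n => [|n IH]; first by split.
rewrite !segS; split=> [[zw /IH eqzw] t|eqzw].
  by rewrite ltnS leq_eqVlt => /orP[/eqP ->|/eqzw].
by rewrite eqzw //; congr cons; apply/IH => t tn; apply: eqzw; exact: ltnW.
Qed.

End Segments.

Section Equivalences.
Variables (E : graph) (A : ssga E).
Implicit Types (z w : linf E) (g : grp A).

Lemma sim_eP z w :
  sim_e A z w <-> forall n, in_orbit A (seg z n.+1) (seg w n.+1).
Proof.
split=> [[gs zw] n|zw].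
  by have [gz <-] := zw n; exists (gs n); rewrite // gz vpath_seg.
have {}zw n : exists g : grp A, vpath (dom g) (seg z n.+1) /\ act g (seg z n.+1) = seg w n.+1.
  by have [g] := zw n; exists g.
have [gs gsP] := choice zw; exists gs => n; have [/vpath_seg_eq ? ?] := gsP n; by split.
Qed.

Lemma sim_e_refl z : sim_e A z z.
Proof. by apply/sim_eP => n; apply: in_orbit_refl (vpath_seg z n). Qed.

Lemma in_orbit_sim_ae z w n : sim_ae A z w -> in_orbit A (seg z n.+1) (seg w n.+1).
Proof.
move=> [F [_ [gs gsP]]]; have [_ gz <-] := gsP n.
by exists (gs n); rewrite // gz vpath_seg.
Qed.

Lemma sim_ae_refl z : sim_ae A z z.
Proof.
exists [set gunit A v | v in [set: vert E]]; split; first exact: finite_image finite_finset.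
exists (fun k => gunit A (rg (lval z k))) => k; split.
- by exists (rg (lval z k)).
- by rewrite gunit_dom.
- by rewrite act_unit // vpath_seg.
Qed.

Lemma cod_seg g z w k : dom g = rg (lval z k) -> act g (seg z k.+1) = seg w k.+1 ->
  cod g = rg (lval w k).
Proof. by move=> gz gzw; apply: vpath_seg_eq; rewrite -gzw act_vpath // gz vpath_seg. Qed.

Lemma sim_ae_sym z w : sim_ae A z w -> sim_ae A w z.
Proof.
move=> [F [finF [gs gsP]]]; exists [set ginv g | g in F]; split; first exact: finite_image.
exists (fun k => ginv (gs k)) => k; have [Fg gz gzw] := gsP k; split.
- by exists (gs k).
- by rewrite ginv_dom; apply: cod_seg gzw.
- by rewrite -gzw act_ginvK // gz vpath_seg.
Qed.

Lemma sim_ae_trans z w y : sim_ae A z w -> sim_ae A w y -> sim_ae A z y.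
Proof.
move=> [F1 [finF1 [g1 g1P]]] [F2 [finF2 [g2 g2P]]].
exists [set gmul gg.1 gg.2 | gg in F2 `*` F1]; split; first exact/finite_image/finite_setX.
exists (fun k => gmul (g2 k) (g1 k)) => k.
have [F1g gz gzw] := g1P k; have [F2g gw gwy] := g2P k.
have g21 : dom (g2 k) = cod (g1 k) by rewrite gw (cod_seg gz gzw).
split; first by exists (g2 k, g1 k).
- by rewrite gmul_dom.
- by rewrite act_mul // ?gzw // gz vpath_seg.
Qed.

Lemma qmap_eqP z w : qmap A z = qmap A w <-> sim_ae A z w.
Proof.
rewrite /qmap unlock; change (ae_pi A z = ae_pi A w <-> sim_ae A z w).
have classE y : sim_ae A y w -> sim_ae A y = sim_ae A w.
  move=> yw; apply/funext => t; apply/propext; split; first exact/sim_ae_trans/sim_ae_sym.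
  exact: sim_ae_trans.
split=> [/(congr1 sval) /= ->|/classE zw]; first exact: sim_ae_refl.
by rewrite /ae_pi; move: (ex_intro _ z _); rewrite zw => p; congr exist; exact: Prop_irrelevance.
Qed.

End Equivalences.

Section PointwiseCylinders.
Variable T : choiceType.
Local Notation S := {ptws nat -> discrete_topology T}.

Lemma cylinder_open (f : S) j : open [set g : S | forall t, (t < j)%N -> g t = f t].
Proof.
elim: j => [|j IH].
  by rewrite (_ : [set g | _] = setT); [exact: openT | apply/seteqP; split].
rewrite (_ : [set g : S | _] = [set g : S | forall t, (t < j)%N -> g t = f t]
    `&` (proj j @^-1` [set f j])).
  apply: openI => //.
  have pj : continuous (fun g : S => (g j : discrete_topology T)).
    exact: (@proj_continuous nat (fun _ => discrete_topology T) j).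
  by apply: (continuousP _).1 pj _ _; exact: discrete_open.
apply/seteqP; split => g /=; first by move=> gf; split=> [t tj|]; apply: gf => //; exact: ltnW.
by move=> [gf gfj] t; rewrite ltnS leq_eqVlt => /orP[/eqP ->|/gf].
Qed.

Lemma nbhs_cylinder (f : S) W : nbhs f W ->
  exists j, forall g : S, (forall t, (t < j)%N -> g t = f t) -> W g.
Proof.
move=> fW; apply: contrapT => /forallNP noj.
have {}noj j : exists g : S, (forall t, (t < j)%N -> g t = f t) /\ ~ W g.
  by move/existsNP: (noj j) => [g /not_implyP]; exists g.
have [g gP] := choice noj.
have gf : g @ \oo --> f.
  apply/pointwise_cvgP => t; apply/discrete_cvg.
  by exists t.+1 => // j /= tj; rewrite (gP j).1.
by have [N _ /(_ N (leqnn N))] := gf _ fW; exact: (gP N).2.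
Qed.

End PointwiseCylinders.

Lemma cluster_ptws_finite (T : finType) (a : nat -> {ptws nat -> discrete_topology T}) :
  exists c : nat -> T, forall j k0, exists2 k, (k0 <= k)%N &
    forall t, (t < j)%N -> a k t = c t.
Proof.
have cpt : compact [set: {ptws nat -> discrete_topology T}].
  have finT : compact [set: discrete_topology T].
    by apply: finite_compact; exact: (@finite_finset T).
  have := @tychonoff nat (fun _ => discrete_topology T) (fun _ => setT) (fun _ => finT).
  by congr compact; apply/seteqP.
have [c [_ ac]] := cpt (a @ \oo) _ filterT.
exists c => j k0.
have tail : (a @ \oo) [set a k | k in [set k | (k0 <= k)%N]].
  by exists k0 => // k /= ?; exists k.
have cyl : nbhs c [set g | forall t, (t < j)%N -> g t = c t].
  by apply: open_nbhs_nbhs; split; [exact: cylinder_open|].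
by have [_ [[k k0k <-] akc]] := ac _ _ tail cyl; exists k.
Qed.

Section LinfTopology.
Variable E : graph.
Implicit Types (z w : linf E).

Lemma seg_invariant_open (P : set (linf E)) j :
  (forall z w, P z -> seg w j = seg z j -> P w) -> open P.
Proof.
move=> Pinv.
exists [set f : edge_space E | exists2 z, P z & forall t, (t < j)%N -> f t = lval z t].
  rewrite openE => f [z Pz fz].
  have cyl : nbhs f [set g | forall t, (t < j)%N -> g t = f t].
    by apply: open_nbhs_nbhs; split; [exact: cylinder_open|].
  by apply: filterS cyl => g gf; exists z => // t tj; rewrite gf // fz.
apply/seteqP; split => w /=; last by move=> Pw; exists w.
by move=> [z Pz wz]; apply: Pinv Pz _; apply/seg_eqP.
Qed.

Lemma open_seg_nbhs (O : set (linf E)) z : open O -> O z ->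
  exists j, forall w, seg w j = seg z j -> O w.
Proof.
move=> [W oW <-] Wz; have [j jW] := nbhs_cylinder (open_nbhs_nbhs (conj oW Wz)).
by exists j => w /seg_eqP wz; apply: jW.
Qed.

Lemma closed_seg_limit (C : set (linf E)) z : closed C ->
  (forall j, exists2 w, C w & seg w j = seg z j) -> C z.
Proof.
move=> cC zC; apply: contrapT => nCz.
have [j jC] := open_seg_nbhs (closed_openC cC) nCz.
by have [w Cw /jC] := zC j.
Qed.

Lemma fpath_nth_rev e0 (w : seq (edge E)) t : fpath_ok w -> (t.+1 < size w)%N ->
  sr (nth e0 (rev w) t.+1) = rg (nth e0 (rev w) t).
Proof.
move=> /(sortedP e0) wok tw; rewrite !nth_rev //; last exact: ltnW.
have -> : (size w - t.+1 = (size w - t.+2).+1)%N by lia.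
by apply/eqP/wok; lia.
Qed.

Lemma seg_eq_lastn e0 z j (w : seq (edge E)) : (j <= size w)%N ->
  (forall t, (t < j)%N -> nth e0 (rev w) t = lval z t) -> seg z j = lastn j w.
Proof.
move=> jw wz; rewrite (lastn_nth_rev e0 jw) /seg; congr rev.
by apply/eq_in_map => t; rewrite mem_iota => /andP[_ /wz].
Qed.

Lemma cluster_linf_ok e0 (w : nat -> seq (edge E)) (c : nat -> edge E) :
  (forall k, fpath_ok (w k)) -> (forall k, (k < size (w k))%N) ->
  (forall j k0, exists2 k, (k0 <= k)%N & forall t, (t < j)%N -> nth e0 (rev (w k)) t = c t) ->
  linf_ok c.
Proof.
move=> wok wsz wc t; have [k tk ck] := wc t.+2 t.+1.
rewrite -(ck t.+1 (ltnSn _)) -(ck t (leqW (ltnSn _))) fpath_nth_rev //.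
exact: leq_ltn_trans tk (wsz k).
Qed.

Lemma seg_cluster2 (u v : nat -> seq (edge E)) :
  (forall k, fpath_ok (u k)) -> (forall k, fpath_ok (v k)) ->
  (forall k, (k < size (u k))%N) -> (forall k, (k < size (v k))%N) ->
  exists z z' : linf E, forall j k0, exists2 k, (k0 <= k)%N &
    seg z j = lastn j (u k) /\ seg z' j = lastn j (v k).
Proof.
move=> uok vok usz vsz.
have [e0 _] : exists e0 : edge E, True by move: (usz 0); case: (u 0) => // e; exists e.
have [c cP] := cluster_ptws_finite
  (fun k t => (nth e0 (rev (u k)) t, nth e0 (rev (v k)) t) : edge E * edge E).
have [z zc] : exists z : linf E, lval z = (fun t => (c t).1).
  apply/linf_exists/(cluster_linf_ok uok usz) => j k0.
  by have [k k0k ck] := cP j k0; exists k => // t /ck <-.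
have [z' z'c] : exists z' : linf E, lval z' = (fun t => (c t).2).
  apply/linf_exists/(cluster_linf_ok vok vsz) => j k0.
  by have [k k0k ck] := cP j k0; exists k => // t /ck <-.
exists z, z' => j k0; have [k k0k ck] := cP j (maxn k0 j).
have jk : (j <= k)%N by exact: leq_trans (leq_maxr _ _) k0k.
exists k; first exact: leq_trans (leq_maxl _ _) k0k.
split; apply: (seg_eq_lastn (e0 := e0)).
- exact: leq_trans jk (ltnW (usz k)).
- by move=> t /ck; rewrite zc => <-.
- exact: leq_trans jk (ltnW (vsz k)).
- by move=> t /ck; rewrite z'c => <-.
Qed.

End LinfTopology.

Section QuotientRepr.
Variables (T : topologicalType) (Q : quotType T) (P : set T).
Hypothesis Pinv : forall x y, (\pi_Q x = \pi_Q y)%qT -> P x -> P y.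

Lemma repr_pi_saturated x : P (repr (\pi_(quotient_topology Q) x))%qT <-> P x.
Proof.
have piK : (\pi_Q (repr (\pi_(quotient_topology Q) x)) = \pi_Q x)%qT.
  by have := reprK (\pi_(quotient_topology Q) x)%qT; rewrite !unlock.
by split; apply: Pinv.
Qed.

Lemma open_repr_quotient : open P -> open [set c : quotient_topology Q | P (repr c)].
Proof.
move=> oP; rewrite /open /= /quotient_open.
suff -> : (\pi_(quotient_topology Q) @^-1` [set c | P (repr c)])%qT = P by [].
by apply/seteqP; split => x /repr_pi_saturated.
Qed.

End QuotientRepr.

Lemma rst_step_change (T : Type) (R : T -> T -> Prop) (P : T -> Prop) a b :
  clos_refl_sym_trans T R a b -> ~ (P a <-> P b) ->
  exists a' b', R a' b' /\ ~ (P a' <-> P b').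
Proof.
elim=> {a b} [a b Rab|a|a b _ IH|a b c _ IHab _ IHbc] Pab; first by exists a, b.
- by case: Pab.
- by apply: IH => -[ba ab]; apply: Pab; split.
- case: (pselect (P a <-> P b)) => [[ab ba]|]; last exact: IHab.
  by apply: IHbc => -[bc cb]; apply: Pab; split => [/ab/bc|/cb/ba].
Qed.

Section OrbitChain.
Variables (E : graph) (A : ssga E) (F0 : set (grp A)) (u : seq (edge E)).

Definition gen_step (w1 w2 : seq (edge E)) :=
  in_orbit A u w1 /\ exists2 s, F0 s & vpath (dom s) w1 /\ act s w1 = w2.

Lemma generated_chain g : generated F0 g -> forall w, in_orbit A u w -> vpath (dom g) w ->
  clos_refl_sym_trans _ gen_step w (act g w).
Proof.
elim=> {g} [g F0g|v|g _ IH|g h gh _ IHg _ IHh] w uw.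
- by move=> gw; apply: rst_step; split=> //; exists g.
- by rewrite gunit_dom => vw; rewrite act_unit //; exact: rst_refl.
- rewrite ginv_dom => gw; apply: rst_sym.
  have vw : vpath (dom (ginv g)) w by rewrite ginv_dom.
  have := IH _ (in_orbit_act uw vw); rewrite act_ginvKV //; apply.
  by rewrite -ginv_cod act_vpath.
- rewrite gmul_dom // => hw; rewrite act_mul //.
  apply: rst_trans (IHh _ uw hw) (IHg _ (in_orbit_act uw hw) _).
  by rewrite gh act_vpath.
Qed.

Lemma in_orbit_chain w : (forall g, generated F0 g) -> in_orbit A u w ->
  clos_refl_sym_trans _ gen_step u w.
Proof.
move=> genF0 [g gu <-]; apply: generated_chain => //.
exact: in_orbit_refl gu.
Qed.

End OrbitChain.

Lemma uniform_contraction (E : graph) (A : ssga E) (F0 F : set (grp A)) :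
  finite_set F0 ->
  (forall g : grp A, exists n, forall k, (n <= k)%N ->
    forall p, vpath (dom g) p -> size p = k -> F (resp g p)) ->
  exists N, forall s, F0 s -> forall p, vpath (dom s) p -> (N <= size p)%N -> F (resp s p).
Proof.
move=> finF0 contr; have [n nP] := choice contr.
have /finite_seqP[l lE] : finite_set [set n s | s in F0] by exact: finite_image.
exists (\max_(i <- l) i) => s F0s p sp Np; apply: nP sp erefl.
apply: leq_trans Np; apply: leq_bigmax_seq => //.
have : [set n s | s in F0] (n s) by exists s.
by rewrite lE.
Qed.

Section Separation.
Variables (E : graph) (A : ssga E) (F0 F : set (grp A)) (N0 : nat).
Hypotheses (finF : finite_set F) (genF0 : forall g, generated F0 g)
  (resF0 : forall s, F0 s -> forall p, vpath (dom s) p -> (N0 <= size p)%N -> F (resp s p)).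
Variables (x : linf E) (O Cl : set (linf E)).
Hypotheses (openO : open O) (closedCl : closed Cl)
  (satO : forall z w, sim_ae A z w -> O z -> O w)
  (OCl : forall z, sim_e A x z -> O z <-> Cl z).

Lemma uniform_prefix : exists L, forall z w, sim_e A x z -> O z -> seg w L = seg z L -> O w.
Proof.
apply: contrapT => noL.
have {}noL L : exists zw : linf E * linf E,
    [/\ sim_e A x zw.1, O zw.1, seg zw.2 L = seg zw.1 L & ~ O zw.2].
  apply: contrapT => noLzw; apply: noL; exists L => z w Xz Oz wz.
  by apply: contrapT => nOw; apply: noLzw; exists (z, w).
have [zw zwP] := choice noL; pose u k := seg (zw k).1 k.+1.
have uok k : fpath_ok (u k) by have /andP[] := vpath_seg (zw k).1 k.
have usz k : (k < size (u k))%N by rewrite size_seg.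
have [z [z' zP]] := seg_cluster2 uok uok usz usz.
have approx j : exists2 k, (j <= k)%N & seg z j = seg (zw k).1 j.
  by have [k jk [zk _]] := zP j j; exists k; rewrite // zk seg_lastn // leqW.
have Xz : sim_e A x z.
  apply/sim_eP => n; have [k _ ->] := approx n.+1.
  by have [/sim_eP Xk _ _ _] := zwP k.
have Oz : O z.
  apply/(OCl Xz); apply: closed_seg_limit closedCl _ => j; have [k _ zk] := approx j.
  by have [Xk Ok _ _] := zwP k; exists (zw k).1; first exact/(OCl Xk).
have [j jO] := open_seg_nbhs openO Oz; have [k jk zk] := approx j.
have [_ _ wz nOw] := zwP k; apply: nOw; apply: jO.
by rewrite zk -(seg_lastn _ jk) wz seg_lastn.
Qed.

Section Switching.
Variable L : nat.
Hypothesis prefixL : forall z w, sim_e A x z -> O z -> seg w L = seg z L -> O w.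

Definition Oseg (u : seq (edge E)) := exists2 y, sim_e A x y /\ O y & seg y L = u.

Lemma Oseg_seg z : sim_e A x z -> Oseg (seg z L) <-> O z.
Proof. by move=> Xz; split=> [[y [Xy Oy] yz]|Oz]; [exact: prefixL Oy _ | exists z]. Qed.

Definition switching M (w1 w2 : seq (edge E)) :=
  [/\ in_orbit A (seg x M.+1) w1, in_orbit A (seg x M.+1) w2,
      forall i, (i <= M)%N -> exists2 h, F h &
        vpath (dom h) (lastn i.+1 w1) /\ act h (lastn i.+1 w1) = lastn i.+1 w2
    & ~ (Oseg (lastn L w1) <-> Oseg (lastn L w2))].

Lemma switching_exists M a b : sim_e A x a -> sim_e A x b -> O a -> ~ O b ->
  (L <= M.+1)%N -> exists w : seq (edge E) * seq (edge E), switching M w.1 w.2.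
Proof.
move=> Xa Xb Oa nOb LM.
(* The N0 letters in front of the last M + 1 make every restriction used below land in F. *)
pose K := (M + N0)%N.
have MK : (M.+1 <= K.+1)%N by rewrite ltnS leq_addr.
have LK := leq_trans LM MK.
have chain : clos_refl_sym_trans _ (gen_step F0 (seg x K.+1)) (seg a K.+1) (seg b K.+1).
  move/sim_eP: Xa => /(_ K) /(in_orbit_chain genF0) xa.
  move/sim_eP: Xb => /(_ K) /(in_orbit_chain genF0) xb.
  exact: rst_trans (rst_sym _ _ _ _ xa) xb.
have [|w1 [_ [[xw1 [s F0s [sw1 <-]]] change]]] :=
  rst_step_change (P := fun w => Oseg (lastn L w)) chain.
  by rewrite !seg_lastn // !Oseg_seg // => -[/(_ Oa)].
have size_w1 : size w1 = K.+1 by rewrite (size_in_orbit xw1) size_seg.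
exists (lastn M.+1 w1, lastn M.+1 (act s w1)); split => /=.
- by rewrite -(seg_lastn x MK); apply: in_orbit_lastn.
- by rewrite -(seg_lastn x MK); apply/in_orbit_lastn/in_orbit_act.
- move=> i iM; have [vh ah] := act_lastn i.+1 sw1.
  exists (resp s (take (size w1 - i.+1) w1)); last by rewrite !lastn_lastn.
  have vs : vpath (dom s) (take (size w1 - i.+1) w1).
    by apply: (vpath_catl (w := drop (size w1 - i.+1) w1)); rewrite cat_take_drop.
  by apply: (resF0 F0s vs); rewrite size_takel ?leq_subr // size_w1 /K; lia.
- by rewrite !lastn_lastn.
Qed.

Lemma switching_limit (w : nat -> seq (edge E) * seq (edge E)) :
  (forall k, switching (k + L) (w k).1 (w k).2) ->
  exists z z', [/\ sim_e A x z, sim_ae A z z' & ~ (Oseg (seg z L) <-> Oseg (seg z' L))].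
Proof.
move=> wP.
have ok1 k : fpath_ok (w k).1 by have [o1 _ _ _] := wP k; exact: in_orbit_fpath o1.
have ok2 k : fpath_ok (w k).2 by have [_ o2 _ _] := wP k; exact: in_orbit_fpath o2.
have sz1 k : (k < size (w k).1)%N.
  by have [o1 _ _ _] := wP k; rewrite (size_in_orbit o1) size_seg ltnS leq_addr.
have sz2 k : (k < size (w k).2)%N.
  by have [_ o2 _ _] := wP k; rewrite (size_in_orbit o2) size_seg ltnS leq_addr.
have [z [z' zP]] := seg_cluster2 ok1 ok2 sz1 sz2; exists z, z'; split.
- apply/sim_eP => n; have [k nk [-> _]] := zP n.+1 n; have [o1 _ _ _] := wP k.
  have nk' : (n.+1 <= (k + L).+1)%N by rewrite ltnS (leq_trans nk) ?leq_addr.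
  by rewrite -(seg_lastn x nk'); apply: in_orbit_lastn.
- have step i : exists h, [/\ F h, dom h = rg (lval z i) & act h (seg z i.+1) = seg z' i.+1].
    have [k ik [zk z'k]] := zP i.+1 i; have [_ _ hP _] := wP k.
    have [h Fh [vh ah]] := hP i (leq_trans ik (leq_addr _ _)).
    by exists h; rewrite zk z'k; split => //; apply: vpath_seg_eq; rewrite zk.
  by have [hs hsP] := choice step; exists F; split => //; exists hs.
- by have [k _ [-> ->]] := zP L 0%N; have [_ _ _] := wP k.
Qed.

Lemma sim_e_class_in_O_of_prefix a b : sim_e A x a -> sim_e A x b -> O a -> O b.
Proof.
move=> Xa Xb Oa; apply: contrapT => nOb.
have [w wP] := choice (fun k => switching_exists Xa Xb Oa nOb (leqW (leq_addl k L))).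
have [z [z' [Xz zz' []]]] := switching_limit wP.
have Xz' : sim_e A x z'.
  by apply/sim_eP => n; apply: in_orbit_trans (in_orbit_sim_ae n zz'); move/sim_eP: Xz.
by rewrite !Oseg_seg //; split; [exact: satO zz' | exact: satO (sim_ae_sym zz')].
Qed.

End Switching.

Lemma sim_e_class_in_O a b : sim_e A x a -> sim_e A x b -> O a -> O b.
Proof.
have [L prefixL] := uniform_prefix; move=> Xa Xb Oa.
exact: (sim_e_class_in_O_of_prefix prefixL Xa Xb Oa).
Qed.

End Separation.

Section LimitSpaceComponents.
Variables (E : graph) (A : ssga E).

Lemma sim_e_of_connected_component mu nu :
  connected_component [set: limit_space A] (qmap A mu) (qmap A nu) -> sim_e A mu nu.
Proof.
move=> [C [Cmu _ connC] Cnu]; apply/sim_eP => n.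
pose P z := in_orbit A (seg mu n.+1) (seg z n.+1).
have Psat z w : qmap A z = qmap A w -> P z <-> P w.
  move=> /qmap_eqP zw; split=> Pz; apply: in_orbit_trans Pz (in_orbit_sim_ae n _) => //.
  exact: sim_ae_sym.
pose W : set (limit_space A) := [set c | P (repr c)].
have openW : open W.
  apply: open_repr_quotient => [z w /Psat zw /zw //|].
  by apply: (seg_invariant_open (j := n.+1)) => z w Pz wz; rewrite /P /= wz.
have openWC : open (~` W).
  apply: (@open_repr_quotient _ _ (~` P)) => [z w /Psat zw nPz /zw //|].
  by apply: (seg_invariant_open (j := n.+1)) => z w nPz wz; rewrite /setC /P /= wz.
have WqP z : W (qmap A z) <-> P z by apply: repr_pi_saturated => ? ? /Psat zw /zw.
have WsepWC : separated W (~` W).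
  by apply/clopen_separatedP; split; last by rewrite -[W]setCK; exact: open_closedC.
have [CW|CWC] := connected_subset WsepWC (fun c _ => EM (W c)) connC.
  by apply/WqP/CW.
by exfalso; apply: (CWC _ Cmu); apply/WqP; exact: in_orbit_refl (vpath_seg mu n).
Qed.

Lemma connected_sim_e_class x : finitely_generated A -> contracting A ->
  connected (qmap A @` sim_e A x).
Proof.
move=> [F0 [finF0 genF0]] [F [finF contrF]] B [c Bc] [O oO BO] [Cl cCl BCl].
have [N0 resF0] := uniform_contraction finF0 contrF.
have OCl z : sim_e A x z -> O (qmap A z) <-> Cl (qmap A z).
  move=> Xz; have Sz : (qmap A @` sim_e A x) (qmap A z) by exists z.
  have : (qmap A @` sim_e A x `&` O) (qmap A z) <-> (qmap A @` sim_e A x `&` Cl) (qmap A z).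
    by rewrite -BO -BCl.
  by rewrite /setI /=; tauto.
have [[a Xa <-] Oa] : (qmap A @` sim_e A x `&` O) c by rewrite -BO.
apply/seteqP; split => [d|_ [b Xb <-]]; first by rewrite BO => -[].
rewrite BO; split; first by exists b.
apply: (sim_e_class_in_O finF genF0 resF0 (O := qmap A @^-1` O) (Cl := qmap A @^-1` Cl)) Xa Xb Oa.
- exact: oO.
- by rewrite -[_ @^-1` Cl]setCK; apply: open_closedC; exact: (closed_openC cCl).
- by move=> z w /qmap_eqP zw; rewrite /preimage /= zw.
- exact: OCl.
Qed.

End LimitSpaceComponents.

Theorem proposition6p1 (E : graph) (A : ssga E) :
  finitely_generated A -> contracting A ->
  forall mu nu : linf E,
    connected_component [set: limit_space A] (qmap A mu) (qmap A nu)
    <-> sim_e A mu nu.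
Proof.
move=> fgA contrA mu nu; split; first exact: sim_e_of_connected_component.
move=> mu_nu; exists (qmap A @` sim_e A mu); last by exists nu.
split=> //; first by exists mu => //; exact: sim_e_refl.
exact: connected_sim_e_class.
Qed.
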